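(* Let $N$ be a positive integer and let $f:\mathbb{N}\to\mathbb{C}$ be periodic with period $N$. Let $a_n(q)$ be the sequence of polynomials in $q$ defined recursively by \[ a_0(q)=0,\qquad a_n(q) = f(n) + \left(1-q^{n-1}\right)a_{n-1}(q) \quad \text{for } n\in\mathbb{N}. \] Then for $q\in\mathbb{C}$ with $|q|<1$ the limit below exists and \[ \lim_{n\rightarrow\infty}\left( \sum_{1\le\ell\le n} f(\ell) - a_n(q) \right) = (q;q)_\infty \sum_{n\ge0}\frac{q^n}{(q;q)_n} \sum_{1\le j\le N} f(j) \left\lceil\frac{n+1-j}{N}\right\rceil . \]
   Context: For $n\in\mathbb{N}_0\cup\{\infty\}$, $(a;q)_n := \prod_{j=0}^{n-1}(1-aq^j)$. *)

From Stdlib Require Import Reals ZArith.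
From Coquelicot Require Import Coquelicot.
Open Scope C_scope.

Notation CC := Complex.C.

Fixpoint qpoch (a q : CC) (n : nat) : CC :=
  match n with
  | O => 1
  | S m => qpoch a q m * (1 - a * Cpow q m)
  end.

Fixpoint aseq (f : nat -> CC) (q : CC) (n : nat) : CC :=
  match n with
  | O => 0
  | S m => f (S m) + (1 - Cpow q m) * aseq f q m
  end.

Fixpoint sum_1_to (g : nat -> CC) (n : nat) : CC :=
  match n with
  | O => 0
  | S m => sum_1_to g m + g (S m)
  end.

(* ceiling of a / N for integers a and N > 0 (Z.div rounds toward -oo) *)
Definition zceil_div (a N : Z) : Z := (- ((- a) / N))%Z.

Definition coef (f : nat -> CC) (N n : nat) : CC :=
  sum_1_to (fun j => f j *
     RtoC (IZR (zceil_div (Z.of_nat n + 1 - Z.of_nat j) (Z.of_nat N)))) N.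

From Stdlib Require Import Reals ZArith Lra Lia.
From Coquelicot Require Import Coquelicot.
Open Scope C_scope.

(* With S_n = f(1) + ... + f(n) and b_n = S_n - a_n, the recursion reads
   b_(n+1) = (1 - q^n) b_n + q^n S_n; dividing by (q;q)_n = (q;q)_(n-1) (1 - q^n)
   makes it telescope, so b_(n+1) = (q;q)_n * sum_(k <= n) q^k S_k / (q;q)_k.
   For N-periodic f the inner coefficient of the corollary equals S_k, because
   ceil((k+1-j)/N) counts the l in [1, k] with l = j (mod N).  Finally (q;q)_n
   converges and stays away from 0 (its tails are >= 1 - sum |q|^i by the
   Weierstrass product inequality), while S_k = O(k), so the series converges. *)

Lemma Cmod_1_minus_ge (z : C) : (1 - Cmod z <= Cmod (1 - z))%R.
Proof.
  pose proof (Cmod_triangle (1 - z) z) as H.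
  replace (1 - z + z) with (RtoC 1) in H by ring. rewrite Cmod_1 in H. lra.
Qed.

Lemma Cmod_1_minus_le (z : C) : (Cmod (1 - z) <= 1 + Cmod z)%R.
Proof.
  pose proof (Cmod_triangle 1 (- z)) as H. rewrite Cmod_1, Cmod_opp in H. exact H.
Qed.

Lemma pow_le_1 (x : R) (n : nat) : (0 <= x <= 1)%R -> (0 <= x ^ n <= 1)%R.
Proof.
  intros Hx. split; [apply pow_le; lra|].
  rewrite <- (pow1 n). apply pow_incr. exact Hx.
Qed.

(* The product and Cmod uniform structures on C differ but have the same neighbourhoods. *)
Lemma filterlim_C_AbsRing {T} (F : (T -> Prop) -> Prop) {FF : Filter F} (u : T -> C) (l : C) :
  filterlim u F (@locally C_UniformSpace l) <->
  filterlim u F (@locally (AbsRing_UniformSpace C_AbsRing) l).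
Proof.
  rewrite (filterlim_locally_ball_norm (U := C_NormedModule)).
  rewrite (filterlim_locally_ball_norm (U := AbsRing_NormedModule C_AbsRing)).
  tauto.
Qed.

Lemma filterlim_Cmult {T} (F : (T -> Prop) -> Prop) {FF : Filter F} (u v : T -> C) (a b : C) :
  filterlim u F (locally a) -> filterlim v F (locally b) ->
  filterlim (fun x => u x * v x) F (locally (a * b)).
Proof.
  rewrite !(filterlim_C_AbsRing F). intros Hu Hv.
  exact (filterlim_comp_2 u v Cmult Hu Hv (filterlim_mult (K := C_AbsRing) a b)).
Qed.

Lemma filterlim_succ_inv {U : Type} (u : nat -> U) (G : (U -> Prop) -> Prop) :
  filterlim (fun n => u (S n)) eventually G -> filterlim u eventually G.
Proof.
  intros H Q HQ. destruct (H Q HQ) as [M HM]. exists (S M).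
  intros [|n] Hn; [lia|]. apply HM. lia.
Qed.

Lemma filterlim_of_ex_series_diff (u : nat -> C) :
  ex_series (V := C_NormedModule) (fun n => u (S n) - u n) ->
  exists l, filterlim u eventually (locally l).
Proof.
  intros Hdiff.
  set (d n := match n with O => u O | S i => u (S i) - u i end).
  assert (Hsum : forall n, sum_n d n = u n).
  { induction n as [|n IH]; [now rewrite sum_O|].
    rewrite sum_Sn, IH. change (u n + (u (S n) - u n) = u (S n)). ring. }
  assert (Hd : ex_series (V := C_NormedModule) d) by (apply ex_series_incr_1; exact Hdiff).
  destruct Hd as [l Hl]. exists l.
  exact (filterlim_ext _ _ Hsum Hl).
Qed.

Lemma ex_series_INR_mul_pow (x : R) :
  (0 <= x < 1)%R -> ex_series (fun n => INR n * x ^ n)%R.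
Proof.
  intros Hx. set (s := ((1 + x) / 2)%R).
  assert (Hs : (0 < s < 1)%R) by (unfold s; lra).
  set (a m := (INR (S m) * s ^ m)%R).
  assert (Ha : forall m, a m <> 0%R).
  { intros m. apply Rmult_integral_contrapositive_currified.
    - apply not_0_INR. lia.
    - apply pow_nonzero. lra. }
  assert (Hratio : is_lim_seq (fun n => Rabs (a (S n) / a n)) s).
  { apply is_lim_seq_ext with (fun n => ((1 + / INR (S n)) * s)%R).
    { intros n. pose proof (pos_INR n). unfold a.
      rewrite Rabs_pos_eq.
      - rewrite !S_INR. simpl pow. field. split; [apply pow_nonzero|]; lra.
      - apply Rle_mult_inv_pos.
        + apply Rmult_le_pos; [apply pos_INR | apply pow_le; lra].
        + apply Rmult_lt_0_compat; [apply lt_0_INR; lia | apply pow_lt; lra]. }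
    replace (Finite s) with (Rbar_mult (Finite (1 + 0)) s) by (simpl; f_equal; ring).
    apply is_lim_seq_scal_r, is_lim_seq_plus'; [apply is_lim_seq_const|].
    apply (is_lim_seq_incr_1 (fun n => / INR n)%R).
    replace (Finite 0) with (Rbar_inv p_infty) by reflexivity.
    apply is_lim_seq_inv; [apply is_lim_seq_INR | discriminate]. }
  apply (ex_series_le (V := R_CompleteNormedModule) _ (fun n => Rabs (a n))).
  2: exact (ex_series_DAlembert a s (proj2 Hs) Ha Hratio).
  intros n. change norm with Rabs. unfold a.
  pose proof (pos_INR n). pose proof (pow_le x n (proj1 Hx)).
  rewrite !Rabs_pos_eq.
  - apply Rmult_le_compat; try lra.
    + rewrite S_INR. lra.
    + apply pow_incr. unfold s. lra.
  - apply Rmult_le_pos; [apply pos_INR | apply pow_le; lra].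
  - apply Rmult_le_pos; lra.
Qed.

Lemma sum_1_to_plus (g h : nat -> C) (M : nat) :
  sum_1_to (fun j => g j + h j) M = sum_1_to g M + sum_1_to h M.
Proof. induction M as [|M IH]; simpl; [ring | rewrite IH; ring]. Qed.

Lemma sum_1_to_ext_le (g h : nat -> C) (M : nat) :
  (forall j, (1 <= j <= M)%nat -> g j = h j) -> sum_1_to g M = sum_1_to h M.
Proof.
  induction M as [|M IH]; intros H; simpl; [reflexivity|].
  rewrite IH by (intros j Hj; apply H; lia). rewrite H by lia. reflexivity.
Qed.

Lemma sum_1_to_truncate (g : nat -> C) (n M : nat) :
  sum_1_to (fun j => if (j <=? n)%nat then g j else 0) M = sum_1_to g (Nat.min n M).
Proof.
  induction M as [|M IH]; cbn [sum_1_to]; [now rewrite Nat.min_0_r|].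
  rewrite IH. destruct (Nat.leb_spec (S M) n).
  - now replace (Nat.min n (S M)) with (S M) by lia; replace (Nat.min n M) with M by lia.
  - replace (Nat.min n (S M)) with n by lia; replace (Nat.min n M) with n by lia. ring.
Qed.

Lemma Cmod_sum_1_to_le (g : nat -> C) (B : R) (n : nat) :
  (forall j, (1 <= j <= n)%nat -> (Cmod (g j) <= B)%R) ->
  (Cmod (sum_1_to g n) <= INR n * B)%R.
Proof.
  induction n as [|n IH]; intros Hg; simpl sum_1_to.
  - rewrite Cmod_0. simpl. lra.
  - eapply Rle_trans; [apply Cmod_triangle|]. rewrite S_INR.
    pose proof (IH (fun j Hj => Hg j ltac:(lia))). pose proof (Hg (S n) ltac:(lia)). lra.
Qed.

Lemma bounded_initial_segment (g : nat -> R) (M : nat) :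
  exists B, forall j, (j <= M)%nat -> (g j <= B)%R.
Proof.
  induction M as [|M [B HB]].
  - exists (g O). intros j Hj. replace j with O by lia. lra.
  - exists (Rmax B (g (S M))). intros j Hj.
    destruct (Nat.eq_dec j (S M)) as [->|]; [apply Rmax_r|].
    eapply Rle_trans; [apply HB; lia | apply Rmax_l].
Qed.

Lemma zceil_div_add (a d : Z) : (0 < d)%Z -> zceil_div (a + d) d = (zceil_div a d + 1)%Z.
Proof.
  intros Hd. unfold zceil_div.
  replace (- (a + d))%Z with (- a + (-1) * d)%Z by lia.
  rewrite Z_div_plus_full by lia. lia.
Qed.

Lemma zceil_div_small_pos (a d : Z) : (0 < a <= d)%Z -> zceil_div a d = 1%Z.
Proof.
  intros H. unfold zceil_div.
  rewrite <- (Z.div_unique (- a) d (-1) (d - a)); lia.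
Qed.

Lemma zceil_div_small_nonpos (a d : Z) : (- d < a <= 0)%Z -> zceil_div a d = 0%Z.
Proof. intros H. unfold zceil_div. rewrite Z.div_small by lia. lia. Qed.

Section Periodic.

Variables (N : nat) (f : nat -> C).
Hypothesis HN : (0 < N)%nat.
Hypothesis Hper : forall n : nat, (1 <= n)%nat -> f (n + N)%nat = f n.

Lemma sum_1_to_add_period (n : nat) : sum_1_to f (n + N) = sum_1_to f n + sum_1_to f N.
Proof.
  induction n as [|n IH]; simpl; [ring|].
  rewrite IH. replace (S (n + N)) with (S n + N)%nat by lia.
  rewrite (Hper (S n)) by lia. ring.
Qed.

Lemma coef_add_period (n : nat) : coef f N (n + N) = coef f N n + sum_1_to f N.
Proof.
  unfold coef. rewrite <- sum_1_to_plus. apply sum_1_to_ext_le. intros j _.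
  replace (Z.of_nat (n + N) + 1 - Z.of_nat j)%Z
    with ((Z.of_nat n + 1 - Z.of_nat j) + Z.of_nat N)%Z by lia.
  rewrite zceil_div_add, plus_IZR, RtoC_plus by lia. simpl IZR. ring.
Qed.

Lemma coef_lt_period (n : nat) : (n < N)%nat -> coef f N n = sum_1_to f n.
Proof.
  intros Hn. unfold coef.
  transitivity (sum_1_to (fun j => if (j <=? n)%nat then f j else 0) N).
  - apply sum_1_to_ext_le. intros j Hj. destruct (Nat.leb_spec j n).
    + rewrite zceil_div_small_pos by lia. simpl IZR. ring.
    + rewrite zceil_div_small_nonpos by lia. simpl IZR. ring.
  - rewrite sum_1_to_truncate. f_equal. lia.
Qed.

Lemma coef_eq_sum_1_to (n : nat) : coef f N n = sum_1_to f n.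
Proof.
  rewrite (Nat.div_mod_eq n N).
  pose proof (Nat.mod_upper_bound n N ltac:(lia)) as Hm.
  generalize (n mod N)%nat (n / N)%nat Hm. intros m k Hmk.
  induction k as [|k IH].
  - rewrite Nat.mul_0_r. apply coef_lt_period. lia.
  - replace (N * S k + m)%nat with ((N * k + m) + N)%nat by lia.
    rewrite coef_add_period, sum_1_to_add_period, IH. reflexivity.
Qed.

Lemma periodic_bounded : exists B, forall n, (1 <= n)%nat -> (Cmod (f n) <= B)%R.
Proof.
  destruct (bounded_initial_segment (fun j => Cmod (f j)) N) as [B HB].
  exists B. intros n. induction n as [n IH] using lt_wf_ind. intros Hn.
  destruct (Nat.le_gt_cases n N); [now apply HB|].
  replace n with ((n - N) + N)%nat by lia. rewrite Hper by lia. apply IH; lia.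
Qed.

End Periodic.

(* One step of the Weierstrass inequality prod (1 - x_i) >= 1 - sum x_i;
   no bound x <= 1 is needed since otherwise the left-hand side is negative. *)
Lemma weierstrass_step (c s x m phi : R) :
  (0 <= c)%R -> (0 <= s)%R -> (0 <= x)%R -> (c * (1 - s) <= m)%R -> (0 <= m)%R ->
  (1 - x <= phi)%R -> (0 <= phi)%R -> (c * (1 - (s + x)) <= m * phi)%R.
Proof.
  intros Hc Hs Hx Hm Hm0 Hphi Hphi0.
  destruct (Rle_dec x 1).
  - assert (m * (1 - x) <= m * phi)%R by (apply Rmult_le_compat_l; lra).
    assert (c * (1 - s) * (1 - x) <= m * (1 - x))%R by (apply Rmult_le_compat_r; lra).
    assert (0 <= c * s * x)%R by (apply Rmult_le_pos; [apply Rmult_le_pos|]; lra).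
    nra.
  - assert (0 <= m * phi)%R by (apply Rmult_le_pos; lra).
    assert (0 <= c * s)%R by (apply Rmult_le_pos; lra).
    nra.
Qed.

Lemma qpoch_neq0 (a q : C) : (forall j, a * q ^ j <> 1) -> forall n, qpoch a q n <> 0.
Proof.
  intros Ha n. induction n as [|n IH]; cbn [qpoch].
  - intros H. apply (f_equal Cmod) in H. rewrite Cmod_1, Cmod_0 in H. lra.
  - apply Cmult_neq_0; [exact IH|]. intros H. apply (Ha n).
    replace (a * q ^ n) with (1 - (1 - a * q ^ n)) by ring. rewrite H. ring.
Qed.

Section QPochhammer.

Variables a q : C.
Hypothesis Hq : (Cmod q < 1)%R.

Let r := Cmod q.

Let geom (n : nat) : R := ((1 - r ^ n) / (1 - r))%R.

Fact r_bounds : (0 <= r < 1)%R.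
Proof. split; [apply Cmod_ge_0 | exact Hq]. Qed.

Fact geom_0 : geom 0 = 0%R.
Proof. pose proof r_bounds. unfold geom. simpl. field. lra. Qed.

Fact geom_S (n : nat) : geom (S n) = (geom n + r ^ n)%R.
Proof. pose proof r_bounds. unfold geom. simpl pow. field. lra. Qed.

Fact geom_bounds (n : nat) : (0 <= geom n <= / (1 - r))%R.
Proof.
  pose proof r_bounds. pose proof (pow_le_1 r n ltac:(lra)). unfold geom, Rdiv.
  assert (0 < / (1 - r))%R by (apply Rinv_0_lt_compat; lra).
  split; [apply Rmult_le_pos; lra|].
  rewrite <- (Rmult_1_l (/ (1 - r))) at 2. apply Rmult_le_compat_r; lra.
Qed.

Lemma Cmod_qpoch_le_exp (n : nat) : (Cmod (qpoch a q n) <= exp (Cmod a * geom n))%R.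
Proof.
  induction n as [|n IH]; cbn [qpoch].
  - rewrite geom_0, Rmult_0_r, exp_0, Cmod_1. lra.
  - rewrite Cmod_mult, geom_S, Rmult_plus_distr_l, exp_plus.
    pose proof (Cmod_1_minus_le (a * q ^ n)) as Hfactor.
    rewrite Cmod_mult, Cmod_pow in Hfactor. fold r in Hfactor.
    pose proof (exp_ineq1_le (Cmod a * r ^ n)).
    apply Rmult_le_compat; try apply Cmod_ge_0; lra.
Qed.

Lemma qpoch_bounded : exists M, forall n, (Cmod (qpoch a q n) <= M)%R.
Proof.
  exists (exp (Cmod a / (1 - r))). intros n.
  eapply Rle_trans; [apply Cmod_qpoch_le_exp|].
  assert (Hle : (Cmod a * geom n <= Cmod a / (1 - r))%R).
  { apply Rmult_le_compat_l; [apply Cmod_ge_0 | apply geom_bounds]. }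
  destruct Hle as [Hlt | ->]; [left; apply exp_increasing, Hlt | lra].
Qed.

Lemma qpoch_cvg : exists P, filterlim (qpoch a q) eventually (locally P).
Proof.
  pose proof r_bounds. destruct qpoch_bounded as [M HM].
  apply filterlim_of_ex_series_diff.
  apply (ex_series_le (V := C_CompleteNormedModule) _ (fun n => M * Cmod a * r ^ n)%R).
  - intros n. change norm with Cmod. cbn [qpoch].
    replace (qpoch a q n * (1 - a * q ^ n) - qpoch a q n)
      with (- (qpoch a q n * a * q ^ n)) by ring.
    rewrite Cmod_opp, !Cmod_mult, Cmod_pow. fold r.
    apply Rmult_le_compat_r; [apply pow_le; lra|].
    apply Rmult_le_compat_r; [apply Cmod_ge_0 | apply HM].
  - apply (ex_series_scal_l (V := R_NormedModule) (M * Cmod a)%R (fun n => r ^ n)%R).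
    apply ex_series_geom. rewrite Rabs_pos_eq; lra.
Qed.

Lemma Cmod_qpoch_add_ge (k j : nat) :
  (Cmod (qpoch a q k) * (1 - Cmod a * r ^ k * geom j) <= Cmod (qpoch a q (k + j)))%R.
Proof.
  pose proof r_bounds.
  induction j as [|j IH].
  - rewrite Nat.add_0_r, geom_0. lra.
  - rewrite Nat.add_succ_r. cbn [qpoch]. rewrite Cmod_mult, geom_S.
    pose proof (Cmod_1_minus_ge (a * q ^ (k + j))) as Hfactor.
    rewrite Cmod_mult, Cmod_pow, pow_add in Hfactor. fold r in Hfactor.
    replace (Cmod a * r ^ k * (geom j + r ^ j))%R
      with (Cmod a * r ^ k * geom j + Cmod a * (r ^ k * r ^ j))%R by ring.
    pose proof (Cmod_ge_0 a). pose proof (pow_le r k). pose proof (pow_le r j).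
    apply weierstrass_step; try apply Cmod_ge_0; try lra.
    + apply Rmult_le_pos; [apply Rmult_le_pos | apply geom_bounds]; lra.
    + apply Rmult_le_pos; [|apply Rmult_le_pos]; lra.
Qed.

Fact geom_tail_small : exists k, (Cmod a * r ^ k * / (1 - r) <= / 2)%R.
Proof.
  pose proof r_bounds. pose proof (Cmod_ge_0 a).
  set (y := ((1 - r) / (2 * (Cmod a + 1)))%R).
  destruct (pow_lt_1_zero r ltac:(rewrite Rabs_pos_eq; lra) y
              ltac:(apply Rdiv_lt_0_compat; lra)) as [k Hk].
  specialize (Hk k (le_n k)). rewrite Rabs_pos_eq in Hk by (apply pow_le; lra).
  assert (Hlt : (Cmod a * r ^ k < (1 - r) / 2)%R).
  { replace ((1 - r) / 2)%R with ((Cmod a + 1) * y)%R by (unfold y; field; lra).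
    pose proof (pow_le r k). nra. }
  exists k. apply (Rmult_le_reg_r (1 - r)); [lra|].
  replace (Cmod a * r ^ k * / (1 - r) * (1 - r))%R with (Cmod a * r ^ k)%R by (field; lra).
  lra.
Qed.

Lemma Cmod_qpoch_eventually_ge :
  (forall j, a * q ^ j <> 1) ->
  exists c k, (0 < c)%R /\ forall j, (c <= Cmod (qpoch a q (k + j)))%R.
Proof.
  intros Ha. pose proof r_bounds. destruct geom_tail_small as [k Hk].
  pose proof (proj1 (Cmod_gt_0 _) (qpoch_neq0 a q Ha k)) as Hpk.
  exists (Cmod (qpoch a q k) / 2)%R, k. split; [lra|]. intros j.
  eapply Rle_trans; [|apply Cmod_qpoch_add_ge].
  assert (Hsmall : (Cmod a * r ^ k * geom j <= / 2)%R).
  { eapply Rle_trans; [|exact Hk]. apply Rmult_le_compat_l; [|apply geom_bounds].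
    apply Rmult_le_pos; [apply Cmod_ge_0 | apply pow_le; lra]. }
  apply Rmult_le_compat_l; lra.
Qed.

End QPochhammer.

Lemma q_mul_pow_neq1 (q : C) : (Cmod q < 1)%R -> forall j, q * q ^ j <> 1.
Proof.
  intros Hq j H. apply (f_equal Cmod) in H.
  change (q * q ^ j) with (q ^ S j) in H. rewrite Cmod_pow, Cmod_1 in H.
  pose proof (pow_lt_1_compat (Cmod q) (S j) (conj (Cmod_ge_0 q) Hq) ltac:(lia)). lra.
Qed.

Lemma sum_1_to_sub_aseq (f : nat -> C) (q : C) :
  (forall n, qpoch q q n <> 0) ->
  forall M, sum_1_to f (S M) - aseq f q (S M)
            = qpoch q q M * sum_n (fun n => q ^ n / qpoch q q n * sum_1_to f n) M.
Proof.
  intros Hnz M. induction M as [|M IH].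
  - rewrite sum_O. cbn [sum_1_to aseq qpoch Cpow]. field.
  - rewrite sum_Sn. change plus with Cplus.
    assert (Hrec : sum_1_to f (S (S M)) - aseq f q (S (S M))
                   = (1 - q ^ S M) * (sum_1_to f (S M) - aseq f q (S M))
                     + q ^ S M * sum_1_to f (S M)).
    { cbn [sum_1_to aseq]. ring. }
    pose proof (Hnz (S M)) as HSM. cbn [qpoch] in HSM |- *.
    change (q * q ^ M) with (q ^ S M) in HSM |- *.
    rewrite Hrec, IH. field.
    split; [|apply Hnz]. intros H. apply HSM. rewrite H. ring.
Qed.

Lemma ex_series_pow_div_qpoch_mul (g : nat -> C) (q : C) (B : R) :
  (Cmod q < 1)%R -> (forall n, (Cmod (g n) <= INR n * B)%R) ->
  ex_series (V := C_NormedModule) (fun n => q ^ n / qpoch q q n * g n).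
Proof.
  intros Hq Hg. pose proof (Cmod_ge_0 q) as Hq0.
  destruct (Cmod_qpoch_eventually_ge q q Hq (q_mul_pow_neq1 q Hq)) as (c & k & Hc & Hlow).
  apply (ex_series_incr_n _ k).
  apply (ex_series_le (V := C_CompleteNormedModule) _
           (fun j => Rabs B / c * (INR (k + j) * Cmod q ^ (k + j)))%R).
  - intros j. change norm with Cmod. specialize (Hlow j). specialize (Hg (k + j)%nat).
    assert (Hnz : qpoch q q (k + j) <> 0) by (apply Cmod_gt_0; lra).
    rewrite Cmod_mult, Cmod_div, Cmod_pow by exact Hnz.
    pose proof (pos_INR (k + j)). pose proof (pow_le (Cmod q) (k + j) Hq0).
    assert (HgB : (Cmod (g (k + j)%nat) <= INR (k + j) * Rabs B)%R).
    { eapply Rle_trans; [exact Hg|]. apply Rmult_le_compat_l; [lra | apply Rle_abs]. }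
    assert (Hinv : (/ Cmod (qpoch q q (k + j)) <= / c)%R) by (apply Rinv_le_contravar; lra).
    unfold Rdiv.
    replace (Rabs B * / c * (INR (k + j) * Cmod q ^ (k + j)))%R
      with (Cmod q ^ (k + j) * / c * (INR (k + j) * Rabs B))%R by ring.
    apply Rmult_le_compat; try apply Cmod_ge_0; try exact HgB.
    + apply Rmult_le_pos; [lra | left; apply Rinv_0_lt_compat, Cmod_gt_0, Hnz].
    + apply Rmult_le_compat_l; lra.
  - apply (ex_series_scal_l (V := R_NormedModule) (Rabs B / c)%R).
    apply (ex_series_incr_n (fun j => INR j * Cmod q ^ j)%R k).
    apply ex_series_INR_mul_pow. lra.
Qed.

Theorem corollary1p4 (N : nat) (f : nat -> CC) (q : CC) :
  (0 < N)%nat ->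
  (forall n : nat, (1 <= n)%nat -> f (n + N)%nat = f n) ->
  (Cmod q < 1)%R ->
  exists (L P S : CC),
    filterlim (fun n => sum_1_to f n - aseq f q n) eventually (locally L) /\
    filterlim (fun n => qpoch q q n) eventually (locally P) /\
    is_series (V := C_NormedModule)
      (fun n => Cpow q n / qpoch q q n * coef f N n) S /\
    L = P * S.
Proof.
  intros HN Hper Hq.
  destruct (qpoch_cvg q q Hq) as [P HP].
  destruct (periodic_bounded N f HN Hper) as [B HB].
  assert (Hseries : ex_series (V := C_NormedModule)
                      (fun n => q ^ n / qpoch q q n * sum_1_to f n)).
  { apply ex_series_pow_div_qpoch_mul with B; [exact Hq|].
    intros n. apply Cmod_sum_1_to_le. intros j Hj. apply HB. lia. }
  destruct Hseries as [S HS].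
  exists (P * S), P, S. repeat split.
  - apply filterlim_succ_inv.
    apply (filterlim_ext (fun M => qpoch q q M * sum_n (fun n => q ^ n / qpoch q q n * sum_1_to f n) M)).
    + intros M. symmetry. apply sum_1_to_sub_aseq, qpoch_neq0, q_mul_pow_neq1, Hq.
    + exact (filterlim_Cmult eventually _ _ P S HP HS).
  - exact HP.
  - apply (is_series_ext (fun n => q ^ n / qpoch q q n * sum_1_to f n)); [|exact HS].
    intros n. now rewrite (coef_eq_sum_1_to N f HN Hper).
Qed.
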